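(* For all integers $k$ and $M$, the series below converges absolutely and $$\sum_{n=-\infty}^{M} q^{2n}\cos_q\!\big(q^{2(k+n)}\big)=q^{-2k}\sin_q\!\big(q^{2(k+M)}\big).$$ Equivalently, with $\Theta(q^{2n}-q^{2M})=1$ for $n\le M$ and $0$ for $n>M$, one has $N_q\sum_{n\in\mathbb{Z}}q^{2n}\cos_q(q^{2(k+n)})\Theta(q^{2n}-q^{2M})=N_q\,q^{-2k}\sin_q(q^{2(k+M)})$ for any constant $N_q$.
   Context: Fix a real number $q>1$ and let $(q^{-2};q^{-2})_n=\prod_{j=1}^n(1-q^{-2j})$. Define $\sin_q(z)=\sum_{n\ge0}(-1)^nq^{-2n(n+1)}\frac{z^{2n+1}}{(q^{-2};q^{-2})_{2n+1}}$ and $\cos_q(z)=\sum_{n\ge0}(-1)^nq^{-2n(n+1)}\frac{z^{2n}}{(q^{-2};q^{-2})_{2n}}$. *)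

From Stdlib Require Import Reals ZArith.
From Coquelicot Require Import Coquelicot.
Open Scope R_scope.

Fixpoint qpoch (a : R) (n : nat) : R :=
  match n with
  | O => 1
  | S m => qpoch a m * (1 - a ^ (S m))
  end.

Definition sin_q (q z : R) : R :=
  Series (fun n : nat => (-1) ^ n * (/ q) ^ (2 * n * (n + 1))
                         * z ^ (2 * n + 1) / qpoch (/ q ^ 2) (2 * n + 1)).

Definition cos_q (q z : R) : R :=
  Series (fun n : nat => (-1) ^ n * (/ q) ^ (2 * n * (n + 1))
                         * z ^ (2 * n) / qpoch (/ q ^ 2) (2 * n)).

(* The term q^{2n} cos_q(q^{2(k+n)}) of the sum over n <= M, reindexed by
   n = M - j with j : nat. *)
Definition lhs_term (q : R) (k M : Z) (j : nat) : R :=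
  let n := (M - Z.of_nat j)%Z in
  powerRZ q (2 * n) * cos_q q (powerRZ q (2 * (k + n))).

(* Write p = q^-2 and u = q^(2(k+M)). The j-th term of the sum is
   q^(2M) p^j cos_q (u p^j) = sum_n q^(2M) c_n u^(2n) (p^(2n+1))^j, where c_n is
   the n-th coefficient of cos_q. Since |c_n| decays like p^(n^2), the double
   series converges absolutely and may be summed over j first: the geometric
   series gives sum_n q^(2M) c_n u^(2n) / (1 - p^(2n+1)), which is
   q^-2k sin_q u because (p;p)_(2n+1) = (p;p)_(2n) (1 - p^(2n+1)). *)

From Stdlib Require Import Reals ZArith Lia Lra.
From Coquelicot Require Import Coquelicot.
Open Scope R_scope.

Lemma ex_series_Rabs_le (a c : nat -> R) :
  (forall n, Rabs (a n) <= c n) -> ex_series c -> ex_series (fun n => Rabs (a n)).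
Proof.
  intros hac hc. apply (@ex_series_le R_AbsRing R_CompleteNormedModule) with c; [|exact hc].
  intros n. change (norm (Rabs (a n))) with (Rabs (Rabs (a n))).
  rewrite Rabs_Rabsolu. apply hac.
Qed.

Lemma is_lim_seq_Rabs_sub_le (x e : nat -> R) (l : R) :
  (forall J, Rabs (x J - l) <= e J) -> is_lim_seq e 0 -> is_lim_seq x l.
Proof.
  intros hx he.
  apply is_lim_seq_le_le with (fun J => l - e J) (fun J => l + e J).
  - intros J. specialize (hx J). apply Rabs_le_between in hx. lra.
  - replace (Finite l) with (Rbar_minus l 0) by (simpl; f_equal; ring).
    apply is_lim_seq_minus'; [apply is_lim_seq_const | exact he].
  - replace (Finite l) with (Rbar_plus l 0) by (simpl; f_equal; ring).
    apply is_lim_seq_plus'; [apply is_lim_seq_const | exact he].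
Qed.

Section GeometricExchange.

Variables (b r : nat -> R) (p : R).
Hypothesis hp : p < 1.
Hypothesis hr : forall n, 0 <= r n <= p.
Hypothesis hb : ex_series (fun n => Rabs (b n)).

Let hp0 : 0 <= p.
Proof. pose proof (hr 0); lra. Qed.

Lemma Rabs_mul_pow_le (a : nat -> R) (n j : nat) :
  Rabs (a n * r n ^ j) <= Rabs (a n) * p ^ j.
Proof.
  rewrite Rabs_mult, <- RPow_abs, (Rabs_pos_eq (r n)) by apply hr.
  apply Rmult_le_compat_l; [apply Rabs_pos | apply pow_incr, hr].
Qed.

Lemma ex_series_Rabs_mul_pow (a : nat -> R) (j : nat) :
  ex_series (fun n => Rabs (a n)) -> ex_series (fun n => Rabs (a n * r n ^ j)).
Proof.
  intros ha. apply ex_series_Rabs_le with (fun n => Rabs (a n) * p ^ j).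
  - intros n. apply Rabs_mul_pow_le.
  - apply ex_series_scal_r, ha.
Qed.

Lemma Rabs_Series_mul_pow_le (a : nat -> R) (j : nat) :
  ex_series (fun n => Rabs (a n)) ->
  Rabs (Series (fun n => a n * r n ^ j)) <= Series (fun n => Rabs (a n)) * p ^ j.
Proof.
  intros ha. eapply Rle_trans; [apply Series_Rabs, ex_series_Rabs_mul_pow, ha|].
  rewrite <- Series_scal_r. apply Series_le; [|apply ex_series_scal_r, ha].
  intros n. split; [apply Rabs_pos | apply Rabs_mul_pow_le].
Qed.

Lemma ex_series_Rabs_Series_mul_pow :
  ex_series (fun j => Rabs (Series (fun n => b n * r n ^ j))).
Proof.
  apply ex_series_Rabs_le with (fun j => Series (fun n => Rabs (b n)) * p ^ j).
  - intros j. apply Rabs_Series_mul_pow_le, hb.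
  - apply ex_series_ext with (fun j => p ^ j * Series (fun n => Rabs (b n))).
    { intros j; apply Rmult_comm. }
    apply ex_series_scal_r, ex_series_geom. rewrite Rabs_pos_eq; lra.
Qed.

Lemma is_series_sum_n_Series_mul_pow (J : nat) :
  is_series (fun n => b n / (1 - r n) * (1 - r n ^ S J))
    (sum_n (fun j => Series (fun n => b n * r n ^ j)) J).
Proof.
  assert (hr1 : forall n, 1 - r n <> 0) by (intros n; pose proof (hr n); lra).
  assert (hrow : forall j, is_series (fun n => b n * r n ^ j)
                              (Series (fun n => b n * r n ^ j))).
  { intros j. apply Series_correct, ex_series_Rabs, ex_series_Rabs_mul_pow, hb. }
  induction J as [|J IH].
  - rewrite sum_O. apply is_series_ext with (fun n => b n * r n ^ 0); [|apply hrow].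
    intros n. change (b n * r n ^ 0 = b n / (1 - r n) * (1 - r n ^ 1)).
    field. apply hr1.
  - rewrite sum_Sn.
    apply is_series_ext with
      (fun n => plus (b n / (1 - r n) * (1 - r n ^ S J)) (b n * r n ^ S J)).
    + intros n. change (b n / (1 - r n) * (1 - r n ^ S J) + b n * r n ^ S J
                        = b n / (1 - r n) * (1 - r n * r n ^ S J)).
      field. apply hr1.
    + apply (@is_series_plus R_AbsRing R_NormedModule); [exact IH | apply hrow].
Qed.

Lemma is_series_Series_mul_pow :
  is_series (fun j => Series (fun n => b n * r n ^ j))
    (Series (fun n => b n / (1 - r n))).
Proof.
  set (d := fun n => b n / (1 - r n)).
  assert (hd : ex_series (fun n => Rabs (d n))).
  { apply ex_series_Rabs_le with (fun n => Rabs (b n) * / (1 - p)).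
    - intros n. pose proof (hr n). unfold d, Rdiv.
      rewrite Rabs_mult, Rabs_inv, (Rabs_pos_eq (1 - r n)) by lra.
      apply Rmult_le_compat_l; [apply Rabs_pos | apply Rinv_le_contravar; lra].
    - apply ex_series_scal_r, hb. }
  apply is_lim_seq_Rabs_sub_le
    with (fun J => Series (fun n => Rabs (d n)) * p ^ S J).
  - intros J.
    assert (htail : is_series (fun n => d n * r n ^ S J)
                      (Series d - sum_n (fun j => Series (fun n => b n * r n ^ j)) J)).
    { apply is_series_ext
        with (fun n => plus (d n) (opp (d n * (1 - r n ^ S J)))).
      - intros n. change (d n + - (d n * (1 - r n ^ S J)) = d n * r n ^ S J). ring.
      - apply (@is_series_minus R_AbsRing R_NormedModule).
        + apply Series_correct, ex_series_Rabs, hd.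
        + apply is_series_sum_n_Series_mul_pow. }
    rewrite Rabs_minus_sym.
    apply Rle_trans with (Rabs (Series (fun n => d n * r n ^ S J))).
    + right. f_equal. symmetry. apply is_series_unique, htail.
    + apply Rabs_Series_mul_pow_le, hd.
  - replace (Finite 0) with (Rbar_mult (Series (fun n => Rabs (d n)) * p) 0)
      by (simpl; f_equal; ring).
    apply is_lim_seq_ext with (fun J => Series (fun n => Rabs (d n)) * p * p ^ J).
    { intros J; simpl; ring. }
    apply is_lim_seq_scal_l, is_lim_seq_geom. rewrite Rabs_pos_eq; lra.
Qed.

End GeometricExchange.

Lemma pow_S_le (p : R) (m : nat) : 0 <= p <= 1 -> 0 <= p ^ S m <= p.
Proof.
  intros hp. assert (p ^ m <= 1) by (rewrite <- (pow1 m); apply pow_incr; lra).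
  pose proof (pow_le p m). simpl. nra.
Qed.

Lemma qpoch_ge_pow (p : R) (m : nat) : 0 < p < 1 -> 0 < (1 - p) ^ m <= qpoch p m.
Proof.
  intros hp. induction m as [|m IH]; [simpl; lra|].
  pose proof (pow_S_le p m ltac:(lra)).
  change (0 < (1 - p) * (1 - p) ^ m <= qpoch p m * (1 - p ^ S m)).
  split; [apply Rmult_lt_0_compat; lra|].
  rewrite Rmult_comm. apply Rmult_le_compat; lra.
Qed.

Lemma ex_series_pow_mul_pow_sqr (C w : R) :
  0 < C -> 0 < w < 1 -> ex_series (fun n => C ^ n * w ^ (n * n)).
Proof.
  intros hC hw.
  assert (ha : forall n, 0 < C ^ n * w ^ (n * n))
    by (intros n; apply Rmult_lt_0_compat; apply pow_lt; lra).
  apply ex_series_ext with (fun n => Rabs (C ^ n * w ^ (n * n))).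
  { intros n. apply Rabs_pos_eq. left; apply ha. }
  apply ex_series_DAlembert with 0; [lra | intros n; pose proof (ha n); lra |].
  apply is_lim_seq_ext with (fun n => C * w * (w ^ 2) ^ n).
  - intros n. pose proof (ha n).
    assert (hS : C ^ S n * w ^ (S n * S n)
                 = C ^ n * w ^ (n * n) * (C * w * (w ^ 2) ^ n)).
    { replace (S n * S n)%nat with (n * n + 1 + 2 * n)%nat by lia.
      rewrite !pow_add, (pow_mult w 2 n). simpl. ring. }
    assert (0 < C * w * (w ^ 2) ^ n)
      by (apply Rmult_lt_0_compat; [nra | apply pow_lt; nra]).
    rewrite hS, Rabs_pos_eq.
    + field; split; apply pow_nonzero; lra.
    + apply Rlt_le, Rdiv_lt_0_compat; nra.
  - replace (Finite 0) with (Rbar_mult (C * w) 0) by (simpl; f_equal; ring).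
    apply is_lim_seq_scal_l, is_lim_seq_geom.
    rewrite Rabs_pos_eq; simpl; nra.
Qed.

Definition cos_q_term (q z : R) (n : nat) : R :=
  (-1) ^ n * (/ q) ^ (2 * n * (n + 1)) * z ^ (2 * n) / qpoch (/ q ^ 2) (2 * n).

Lemma inv_q_sqr_bounds (q : R) : 1 < q -> 0 < / q ^ 2 < 1.
Proof.
  intros hq. split; [apply Rinv_0_lt_compat; nra|].
  rewrite <- Rinv_1. apply Rinv_lt_contravar; nra.
Qed.

Lemma Rabs_cos_q_term_le (q y : R) (n : nat) : 1 < q ->
  Rabs (cos_q_term q y n)
  <= ((y ^ 2 + 1) / (1 - / q ^ 2) ^ 2) ^ n * (/ q ^ 2) ^ (n * n).
Proof.
  intros hq. pose proof (inv_q_sqr_bounds q hq) as hp.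
  unfold cos_q_term. set (p := / q ^ 2) in *.
  pose proof (qpoch_ge_pow p (2 * n) hp) as [hQ0 hQ].
  assert (hw : (/ q) ^ (2 * n * (n + 1)) = p ^ (n * n) * p ^ n).
  { rewrite <- pow_add. unfold p. rewrite <- pow_inv, <- pow_mult. f_equal. lia. }
  assert (hpn : 0 <= p ^ n <= 1).
  { split; [apply pow_le; lra | rewrite <- (pow1 n); apply pow_incr; lra]. }
  assert (hy : 0 <= (y ^ 2) ^ n <= (y ^ 2 + 1) ^ n).
  { split; [apply pow_le; nra | apply pow_incr; nra]. }
  assert (hinv : 0 <= / qpoch p (2 * n) <= / (1 - p) ^ (2 * n)).
  { split; [apply Rlt_le, Rinv_0_lt_compat; lra | apply Rinv_le_contravar; lra]. }
  unfold Rdiv.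
  rewrite hw, (pow_mult y 2 n), Rpow_mult_distr, pow_inv, <- (pow_mult (1 - p) 2 n).
  rewrite !Rabs_mult, pow_1_abs, Rabs_inv, (Rabs_pos_eq (qpoch _ _)) by lra.
  rewrite !Rabs_pos_eq by (apply pow_le; nra).
  replace (1 * (p ^ (n * n) * p ^ n) * (y ^ 2) ^ n * / qpoch p (2 * n))
    with (p ^ (n * n) * (p ^ n * ((y ^ 2) ^ n * / qpoch p (2 * n)))) by ring.
  replace ((y ^ 2 + 1) ^ n * / (1 - p) ^ (2 * n) * p ^ (n * n))
    with (p ^ (n * n) * (1 * ((y ^ 2 + 1) ^ n * / (1 - p) ^ (2 * n)))) by ring.
  apply Rmult_le_compat_l; [apply pow_le; lra|].
  apply Rmult_le_compat; [lra | apply Rmult_le_pos; lra | lra | apply Rmult_le_compat; lra].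
Qed.

Lemma ex_series_Rabs_cos_q_term (q y : R) : 1 < q ->
  ex_series (fun n => Rabs (cos_q_term q y n)).
Proof.
  intros hq. pose proof (inv_q_sqr_bounds q hq) as hp.
  apply ex_series_Rabs_le with
    (fun n => ((y ^ 2 + 1) / (1 - / q ^ 2) ^ 2) ^ n * (/ q ^ 2) ^ (n * n)).
  - intros n. apply Rabs_cos_q_term_le, hq.
  - apply ex_series_pow_mul_pow_sqr; [|exact hp].
    apply Rdiv_lt_0_compat; [nra | apply pow_lt; lra].
Qed.

Lemma powerRZ_two_mul_sub (q : R) (a : Z) (j : nat) : 0 < q ->
  powerRZ q (2 * (a - Z.of_nat j)) = powerRZ q (2 * a) * (/ q ^ 2) ^ j.
Proof.
  intros hq.
  replace (2 * (a - Z.of_nat j))%Z with (2 * a + - Z.of_nat (2 * j))%Z by lia.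
  rewrite powerRZ_add, powerRZ_neg', <- pow_powerRZ, pow_inv, pow_mult by lra.
  reflexivity.
Qed.

(* The factor [p^j (p^j)^(2n)] of the expanded term is [(p^(2n+1))^j]. *)
Lemma lhs_term_Series (q : R) (k M : Z) (j : nat) : 1 < q ->
  lhs_term q k M j
  = Series (fun n => powerRZ q (2 * M) * cos_q_term q (powerRZ q (2 * (k + M))) n
                     * ((/ q ^ 2) ^ (2 * n + 1)) ^ j).
Proof.
  intros hq. unfold lhs_term, cos_q; cbv zeta.
  replace (k + (M - Z.of_nat j))%Z with ((k + M) - Z.of_nat j)%Z by lia.
  rewrite !powerRZ_two_mul_sub by lra.
  rewrite <- Series_scal_l. apply Series_ext. intros n. unfold cos_q_term.
  replace (((/ q ^ 2) ^ (2 * n + 1)) ^ j) with ((/ q ^ 2) ^ j * ((/ q ^ 2) ^ j) ^ (2 * n))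
    by (rewrite <- !pow_mult, <- pow_add; f_equal; lia).
  rewrite Rpow_mult_distr. field.
  pose proof (qpoch_ge_pow (/ q ^ 2) (2 * n) (inv_q_sqr_bounds q hq)). lra.
Qed.

Lemma sin_q_Series (q z : R) : 1 < q ->
  sin_q q z = Series (fun n => z * cos_q_term q z n / (1 - (/ q ^ 2) ^ (2 * n + 1))).
Proof.
  intros hq. pose proof (inv_q_sqr_bounds q hq) as hp.
  unfold sin_q. apply Series_ext. intros n. unfold cos_q_term.
  replace (2 * n + 1)%nat with (S (2 * n)) by lia.
  pose proof (qpoch_ge_pow (/ q ^ 2) (2 * n) hp).
  pose proof (pow_S_le (/ q ^ 2) (2 * n) ltac:(lra)).
  change (qpoch (/ q ^ 2) (S (2 * n)))
    with (qpoch (/ q ^ 2) (2 * n) * (1 - (/ q ^ 2) ^ S (2 * n))).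
  change (z ^ S (2 * n)) with (z * z ^ (2 * n)). field. split; lra.
Qed.

Theorem mainTheorem8 (q : R) (k M : Z) (hq : 1 < q) :
  ex_series (fun j : nat => Rabs (lhs_term q k M j)) /\
  is_series (lhs_term q k M)
    (powerRZ q (-2 * k) * sin_q q (powerRZ q (2 * (k + M)))).
Proof.
  pose proof (inv_q_sqr_bounds q hq) as hp.
  set (u := powerRZ q (2 * (k + M))).
  set (b := fun n => powerRZ q (2 * M) * cos_q_term q u n).
  set (r := fun n => (/ q ^ 2) ^ (2 * n + 1)).
  assert (hr : forall n, 0 <= r n <= / q ^ 2).
  { intros n. unfold r. rewrite Nat.add_1_r. apply pow_S_le. lra. }
  assert (hb : ex_series (fun n => Rabs (b n))).
  { apply ex_series_ext with (fun n => Rabs (cos_q_term q u n) * Rabs (powerRZ q (2 * M))).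
    - intros n. unfold b. rewrite Rabs_mult. apply Rmult_comm.
    - apply ex_series_scal_r, ex_series_Rabs_cos_q_term, hq. }
  assert (hsin : powerRZ q (-2 * k) * sin_q q u = Series (fun n => b n / (1 - r n))).
  { assert (hA : powerRZ q (2 * M) = powerRZ q (-2 * k) * u).
    { unfold u. rewrite <- powerRZ_add by lra. f_equal. lia. }
    rewrite sin_q_Series, <- Series_scal_l by exact hq. apply Series_ext. intros n.
    pose proof (hr n). unfold b, r in *. rewrite hA. field. lra. }
  assert (hrow : forall j, lhs_term q k M j = Series (fun n => b n * r n ^ j))
    by (intros j; apply lhs_term_Series, hq).
  split.
  - apply ex_series_ext with (fun j => Rabs (Series (fun n => b n * r n ^ j))).
    { intros j. rewrite hrow. reflexivity. }
    exact (ex_series_Rabs_Series_mul_pow b r (/ q ^ 2) (proj2 hp) hr hb).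
  - rewrite hsin. apply is_series_ext with (fun j => Series (fun n => b n * r n ^ j)).
    { intros j. rewrite hrow. reflexivity. }
    exact (is_series_Series_mul_pow b r (/ q ^ 2) (proj2 hp) hr hb).
Qed.
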